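(* Let $\mathbf{Z}\in\mathbb{R}^{n\times d}$ and $\lambda\geq 0$, and assume that $\lambda>0$ or that $\mathbf{Z}$ has full column rank. Let $s_{\lambda}(\mathbf{Z}):=\mathrm{Tr}\big((\mathbf{Z}^{T}\mathbf{Z}+\lambda\mathbf{I}_d)^{-1}\mathbf{Z}^{T}\mathbf{Z}\big)$. Let $\delta\in(0,1)$ and let $\mathbf{S}\in\mathbb{R}^{s\times n}$ be a CountSketch matrix with $s\geq 20\,s_{\lambda}(\mathbf{Z})^{2}/\delta$. Then with probability at least $1-\delta$, all generalized eigenvalues of the pencil $(\mathbf{Z}^{T}\mathbf{Z}+\lambda\mathbf{I}_d,\ \mathbf{Z}^{T}\mathbf{S}^{T}\mathbf{S}\mathbf{Z}+\lambda\mathbf{I}_d)$ lie in the interval $[1/2,3/2]$, and $\kappa(\mathbf{Z}^{T}\mathbf{Z}+\lambda\mathbf{I}_d,\ \mathbf{Z}^{T}\mathbf{S}^{T}\mathbf{S}\mathbf{Z}+\lambda\mathbf{I}_d)\leq 3$.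
   Context: A CountSketch matrix $\mathbf{S}\in\mathbb{R}^{s\times n}$ is defined by a random hash function $h:\{1,\dots,n\}\to\{1,\dots,s\}$ and a random sign function $g:\{1,\dots,n\}\to\{-1,+1\}$: the $j$-th column of $\mathbf{S}$ has a single nonzero entry, equal to $g(j)$, in row $h(j)$; equivalently $(\mathbf{S}\mathbf{x})_i=\sum_{j:h(j)=i}g(j)x_j$. For a pencil $(\mathbf{A},\mathbf{B})$ with $\mathbf{B}$ symmetric positive definite, the generalized eigenvalues are the $\lambda$ with $\mathbf{A}\mathbf{v}=\lambda\mathbf{B}\mathbf{v}$ for some $\mathbf{v}\neq 0$, and $\kappa(\mathbf{A},\mathbf{B})$ denotes the ratio of the largest to the smallest generalized eigenvalue in absolute value (equal to $\kappa(\mathbf{B}^{-1/2}\mathbf{A}\mathbf{B}^{-1/2})$). *)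

From HB Require Import structures.
From mathcomp Require Import all_boot all_order all_algebra.
From mathcomp Require Import boolp classical_sets reals.
Set Implicit Arguments. Unset Strict Implicit. Unset Printing Implicit Defensive.
Import Order.TTheory GRing.Theory Num.Theory.
Local Open Scope ring_scope.

Definition countsketch (R : pzRingType) (s n : nat)
  (h : {ffun 'I_n -> 'I_s}) (g : {ffun 'I_n -> bool}) : 'M[R]_(s, n) :=
  \matrix_(i < s, j < n) (if h j == i then (if g j then 1 else -1) else 0).

Definition stat_dim (R : fieldType) (n d : nat) (Z : 'M[R]_(n, d)) (lam : R) : R :=
  \tr (invmx (Z^T *m Z + lam%:M) *m (Z^T *m Z)).

Definition gen_eig (R : pzRingType) (d : nat) (A B : 'M[R]_d) (mu : R) : Prop :=
  exists v : 'cV[R]_d, v != 0 /\ A *m v = mu *: (B *m v).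

Definition gen_kappa (R : realType) (d : nat) (A B : 'M[R]_d) : R :=
  sup [set `|mu| | mu in gen_eig A B] / inf [set `|mu| | mu in gen_eig A B].

(* The "good" event of Lemma 3.1 for a given sketch S: the pencil is a genuine
   pencil (second matrix invertible, it is symmetric PSD hence then SPD),
   all generalized eigenvalues lie in [1/2, 3/2], and kappa <= 3. *)
Definition good_event (R : realType) (n d s : nat) (Z : 'M[R]_(n, d)) (lam : R)
  (S : 'M[R]_(s, n)) : Prop :=
  let A := Z^T *m Z + lam%:M in
  let B := Z^T *m S^T *m S *m Z + lam%:M in
  [/\ B \in unitmx,
      (forall mu, gen_eig A B mu -> 1/2 <= mu <= 3/2)
    & gen_kappa A B <= 3].

Definition countsketch_prob (R : realType) (n s : nat)
  (E : {ffun 'I_n -> 'I_s} -> {ffun 'I_n -> bool} -> Prop) : R :=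
  #|[set hg : {ffun 'I_n -> 'I_s} * {ffun 'I_n -> bool} |
      asbool (E hg.1 hg.2)]|%:R
  / #|{: {ffun 'I_n -> 'I_s} * {ffun 'I_n -> bool}}|%:R.

From mathcomp Require Import all_boot all_order all_algebra.
From mathcomp Require Import boolp classical_sets reals.
From mathcomp Require Import ring lra.
Import Order.TTheory GRing.Theory Num.Theory.
Local Open Scope ring_scope.
Set Implicit Arguments. Unset Strict Implicit. Unset Printing Implicit Defensive.

(* Write A = Z^T Z + lam I = C^T C with C = [Z; sqrt(lam) I], let P be the
   orthogonal projector onto the range of C and K = Z A^-1 Z^T its upper left
   block, so that tr K = s_lam(Z).  For the sketching error D = S^T S - I and
   y = C v we have P y = y, and Cauchy-Schwarz in the Frobenius inner product
   gives (v^T Z^T D Z v)^2 = (y^T P D P y)^2 <= tr(D K D K) (v^T A v)^2.  Hence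
   all generalized eigenvalues lie in [1/2, 3/2] as soon as tr(D K D K) <= 1/9.
   Averaging over hashes and signs, only colliding pairs of distinct indices
   contribute: E tr(D K D K) = (1/s) sum_{j <> k} (K_kj^2 + K_kk K_jj), which is
   at most 2 (tr K)^2 / s because K is a projector block (K_kj^2 <= K_kk K_jj).
   Markov's inequality concludes. *)

Lemma cauchy_schwarz_sum (R : realDomainType) (I : finType) (x y : I -> R) :
  (\sum_i x i * y i) ^+ 2 <= (\sum_i x i ^+ 2) * (\sum_i y i ^+ 2).
Proof.
have lagrange : \sum_i \sum_j (x i * y j - x j * y i) ^+ 2 =
    \sum_i \sum_j x i ^+ 2 * y j ^+ 2 + \sum_i \sum_j x j ^+ 2 * y i ^+ 2
    - 2 * \sum_i \sum_j (x i * y i) * (x j * y j).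
  rewrite mulr_sumr -!big_split -sumrN -big_split /=; apply: eq_bigr => i _.
  rewrite mulr_sumr -!big_split -sumrN -big_split /=; apply: eq_bigr => j _.
  ring.
have : 0 <= \sum_i \sum_j (x i * y j - x j * y i) ^+ 2.
  by apply: sumr_ge0 => i _; apply: sumr_ge0 => j _; exact: sqr_ge0.
rewrite lagrange [in X in _ + X - _]exchange_big /= -!big_distrlr /= -expr2.
lra.
Qed.

Lemma sum_natr_eq_mul (R : pzSemiRingType) (I : finType) (a : I) (F : I -> R) :
  \sum_i (i == a)%:R * F i = F a.
Proof.
rewrite (bigD1 a) //= eqxx mul1r big1 ?addr0 // => i /negbTE ->.
by rewrite mul0r.
Qed.

Definition qform (R : pzRingType) d (M : 'M[R]_d) (v : 'cV[R]_d) : R :=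
  (v^T *m M *m v) 0 0.

Lemma qformE (R : comPzRingType) d (M : 'M[R]_d) v :
  qform M v = \sum_a v a 0 * (M *m v) a 0.
Proof. by rewrite /qform -mulmxA mxE; apply: eq_bigr => a _; rewrite mxE. Qed.

Lemma qformB (R : pzRingType) d (M N : 'M[R]_d) v :
  qform (M - N) v = qform M v - qform N v.
Proof. by rewrite /qform mulmxBr mulmxBl [LHS]mxE [X in _ + X = _]mxE. Qed.

Lemma qform_gram (R : comPzRingType) m d (C : 'M[R]_(m, d)) v :
  qform (C^T *m C) v = \sum_a (C *m v) a 0 ^+ 2.
Proof.
rewrite /qform !mulmxA -trmx_mul -mulmxA mxE.
by apply: eq_bigr => a _; rewrite mxE expr2.
Qed.

Lemma mxtrace_mul4E (R : comPzRingType) m (D K : 'M[R]_m) :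
  \tr (D *m K *m D *m K) = \sum_j \sum_l \sum_k \sum_i D j k * K k l * D l i * K i j.
Proof.
rewrite /mxtrace; apply: eq_bigr => j _; rewrite mxE.
under eq_bigr do rewrite mxE mulr_suml.
rewrite exchange_big /=; apply: eq_bigr => l _.
under eq_bigr do rewrite mxE mulr_suml mulr_suml.
by rewrite exchange_big.
Qed.

Definition orthoproj (R : comUnitRingType) m d (C : 'M[R]_(m, d)) : 'M[R]_m :=
  C *m invmx (C^T *m C) *m C^T.

Section OrthoProjector.
Variables (R : comUnitRingType) (m d : nat) (C : 'M[R]_(m, d)).
Hypothesis gram_unit : C^T *m C \in unitmx.

Lemma orthoproj_mul : orthoproj C *m C = C.
Proof. by rewrite /orthoproj -!mulmxA mulVmx // mulmx1. Qed.

Lemma trmx_orthoproj : (orthoproj C)^T = orthoproj C.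
Proof. by rewrite /orthoproj !trmx_mul trmxK trmx_inv trmx_mul trmxK mulmxA. Qed.

Lemma orthoproj_idem : orthoproj C *m orthoproj C = orthoproj C.
Proof.
have trC_P : C^T *m orthoproj C = C^T.
  by rewrite -{1}trmx_orthoproj -trmx_mul orthoproj_mul.
by rewrite {1}/orthoproj -mulmxA trC_P.
Qed.

End OrthoProjector.

Section SymmetricIdempotent.
Variables (R : realDomainType) (m : nat) (P : 'M[R]_m).
Hypotheses (trmx_P : P^T = P) (P_idem : P *m P = P).

Lemma idem_entry_sqr_le a b : P a b ^+ 2 <= P a a * P b b.
Proof.
have gramP x y : P x y = \sum_c P x c * P y c.
  by rewrite -{1}P_idem mxE; apply: eq_bigr => c _; rewrite -{2}trmx_P mxE.
rewrite !gramP.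
under [X in _ <= X * _]eq_bigr do rewrite -expr2.
under [X in _ <= _ * X]eq_bigr do rewrite -expr2.
exact: cauchy_schwarz_sum.
Qed.

Variable D : 'M[R]_m.
Hypothesis trmx_D : D^T = D.

Lemma mxtrace_conj_idemE :
  \tr (D *m P *m D *m P) = \sum_a \sum_b (P *m D *m P) a b ^+ 2.
Proof.
have trPDP : (P *m D *m P)^T = P *m D *m P by rewrite !trmx_mul trmx_P trmx_D mulmxA.
have -> : \tr (D *m P *m D *m P) = \tr ((P *m D *m P) *m (P *m D *m P)^T).
  rewrite trPDP -!mulmxA (mulmxA P P) P_idem [RHS]mxtrace_mulC.
  by rewrite -!mulmxA P_idem.
rewrite /mxtrace; apply: eq_bigr => a _; rewrite mxE; apply: eq_bigr => b _.
by rewrite [_^T b a]mxE expr2.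
Qed.

Lemma mxtrace_conj_idem_ge0 : 0 <= \tr (D *m P *m D *m P).
Proof.
rewrite mxtrace_conj_idemE.
by apply: sumr_ge0 => a _; apply: sumr_ge0 => b _; exact: sqr_ge0.
Qed.

Lemma qform_sqr_le_mxtrace_conj y : P *m y = y ->
  qform D y ^+ 2 <= \tr (D *m P *m D *m P) * (\sum_a y a 0 ^+ 2) ^+ 2.
Proof.
move=> Py; set M := P *m D *m P.
have -> : qform D y = qform M y.
  by rewrite /qform /M -{1}Py -{2}Py trmx_mul trmx_P !mulmxA.
rewrite mxtrace_conj_idemE -/M qformE.
have rowsM : \sum_a (M *m y) a 0 ^+ 2 <=
    (\sum_a \sum_b M a b ^+ 2) * \sum_a y a 0 ^+ 2.
  rewrite mulr_suml; apply: ler_sum => a _; rewrite mxE.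
  exact: (cauchy_schwarz_sum (fun b => M a b) (fun b => y b 0)).
have y2_ge0 : 0 <= \sum_a y a 0 ^+ 2 by apply: sumr_ge0 => a _; exact: sqr_ge0.
apply: le_trans (cauchy_schwarz_sum (fun a => y a 0) (fun a => (M *m y) a 0)) _.
by rewrite expr2 mulrA mulrC ler_wpM2r.
Qed.

End SymmetricIdempotent.

Lemma sum_offdiag_le (R : realDomainType) m (K : 'M[R]_m) :
  (forall j k, K k j ^+ 2 <= K k k * K j j) ->
  \sum_j \sum_k (j != k)%:R * (K k j * K k j + K k k * K j j) <= 2 * (\tr K) ^+ 2.
Proof.
move=> K_le; rewrite /mxtrace expr2 big_distrlr mulr_sumr; apply: ler_sum => j _.
rewrite /= mulr_sumr; apply: ler_sum => k _.
have [<-|jk] := eqVneq j k; first by rewrite mul0r -expr2 mulr_ge0 ?sqr_ge0.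
by have := K_le j k; rewrite mul1r expr2; lra.
Qed.

(** * Relatively perturbed pencils *)

Lemma posdef_unitmx (R : realFieldType) d (M : 'M[R]_d) :
  (forall v, v != 0 -> 0 < qform M v) -> M \in unitmx.
Proof.
move=> M_pos; rewrite -row_free_unit -kermx_eq0; apply/eqP/row_matrixP => i.
rewrite row0; set x := row i (kermx M).
have xM : x *m M = 0 by rewrite /x -row_mul mulmx_ker row0.
apply/eqP/negPn/negP => /eqP x_neq0.
have /M_pos : x^T != 0 by rewrite trmx_eq0; apply/eqP.
by rewrite /qform trmxK xM mul0mx mxE ltxx.
Qed.

Section RelativePerturbation.
Variables (R : realFieldType) (d : nat) (A B : 'M[R]_d).
Hypothesis rel_perturb : forall v, v != 0 ->
  0 < qform A v /\ qform (B - A) v ^+ 2 <= qform A v ^+ 2 / 9.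

Lemma rel_perturb_unitmx : B \in unitmx.
Proof.
apply: posdef_unitmx => v /rel_perturb [].
rewrite qformB; set a := qform A v; set b := qform B v; nra.
Qed.

(* a = mu b together with |b - a| <= a / 3 even forces mu into [3/4, 3/2]. *)
Lemma rel_perturb_gen_eig mu : gen_eig A B mu -> 1/2 <= mu <= 3/2.
Proof.
case=> v [v_neq0 Av]; have [] := rel_perturb v_neq0.
have : qform A v = mu * qform B v.
  by rewrite /qform -mulmxA Av -scalemxAr mxE mulmxA.
rewrite qformB; set a := qform A v; set b := qform B v => a_eq a_gt0 err_le.
have err_ub : b - a <= a / 3 by nra.
have err_lb : - (a / 3) <= b - a by nra.
apply/andP; split; nra.
Qed.

End RelativePerturbation.

Section GenKappa.
Local Open Scope classical_set_scope.

Lemma gen_kappa_le (R : realType) d (A B : 'M[R]_d) :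
  (forall mu, gen_eig A B mu -> 1/2 <= mu <= 3/2) -> gen_kappa A B <= 3.
Proof.
move=> eig_in; rewrite /gen_kappa; set E := [set `|mu| | mu in gen_eig A B].
have [E_neq0|E0] := pselect (E !=set0); last first.
  have -> : E = set0 by apply/eqP/negPn/negP => /set0P.
  by rewrite inf0 invr0 mulr0.
have ub : ubound E (3/2) by move=> _ [mu /eig_in /andP[? ?] <-]; rewrite ger0_norm //; lra.
have lb : lbound E (1/2) by move=> _ [mu /eig_in /andP[? ?] <-]; rewrite ger0_norm //; lra.
have := ge_sup E_neq0 ub; have := lb_le_inf E_neq0 lb => inf_ge sup_le.
by rewrite ler_pdivrMr; lra.
Qed.

End GenKappa.

Lemma card_markov (R : realFieldType) (T : finType) (A : {set T}) (f : T -> R) c :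
  (forall x, 0 <= f x) -> (forall x, f x <= c -> x \in A) ->
  (#|{: T}|%:R - #|A|%:R) * c <= \sum_x f x.
Proof.
move=> f_ge0 f_le; rewrite -(cardsC A) natrD addrAC subrr add0r mulr_natl -sumr_const.
apply: le_trans (_ : \sum_(x in ~: A) f x <= _).
  apply: ler_sum => x; rewrite inE => xA; apply: ltW; rewrite ltNge.
  by apply: contra xA; exact: f_le.
by rewrite [X in _ <= X](bigID (mem (~: A))) /= lerDl sumr_ge0.
Qed.

(** * Second moments of the CountSketch error *)

Section RandomSigns.
Variables (R : numDomainType) (I : finType).
Local Notation signs := {ffun I -> bool}.

Definition rsign (g : signs) i : R := if g i then 1 else -1.

Definition flip_at i (g : signs) : signs := [ffun x => if x == i then ~~ g x else g x].

Lemma flip_atK i : involutive (flip_at i).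
Proof. by move=> g; apply/ffunP => x; rewrite !ffunE; case: (x == i); rewrite ?negbK. Qed.

Lemma rsign_flip_at i g x :
  rsign (flip_at i g) x = if x == i then - rsign g x else rsign g x.
Proof. by rewrite /rsign ffunE; case: (x == i) => //; case: (g x); rewrite ?opprK. Qed.

Lemma rsign_sqr g i : rsign g i * rsign g i = 1.
Proof. by rewrite /rsign; case: (g i); rewrite ?mulrNN mulr1. Qed.

(* Flipping the sign of the unpaired index i is an involution that negates the sum. *)
Lemma sum_rsign4_unpaired (i a b c : I) : i != a -> i != b -> i != c ->
  \sum_(g : signs) rsign g i * rsign g a * rsign g b * rsign g c = 0.
Proof.
move=> ia ib ic; set S := \sum_g _.
have S_opp : S = - S.
  rewrite [in LHS]/S (reindex_inj (can_inj (flip_atK i))) /= -sumrN.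
  apply: eq_bigr => g _; rewrite !rsign_flip_at eqxx.
  by rewrite ![_ == i]eq_sym (negbTE ia) (negbTE ib) (negbTE ic) !mulNr.
have : S *+ 2 == 0 by rewrite mulr2n {1}S_opp addNr.
by rewrite mulrn_eq0 => /eqP.
Qed.

Definition same_pair (j k l m : I) : bool :=
  ((l == j) && (m == k)) || ((l == k) && (m == j)).

Lemma same_pairE (j k l m : I) : j != k ->
  (same_pair j k l m)%:R = (l == j)%:R * (m == k)%:R + (l == k)%:R * (m == j)%:R :> R.
Proof.
move=> jk; rewrite /same_pair; have [->|lj] := eqVneq l j.
  by rewrite (negbTE jk) orbF mul1r mul0r addr0.
by rewrite mul0r add0r -natrM mulnb.
Qed.

Lemma sum_rsign4 (j k l m : I) : j != k -> l != m ->
  \sum_(g : signs) rsign g j * rsign g k * rsign g l * rsign g m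
  = (same_pair j k l m)%:R * #|{: signs}|%:R.
Proof.
move=> jk lm; case pair_jk: (same_pair j k l m).
  rewrite mul1r -sumr_const; apply: eq_bigr => g _.
  case/orP: pair_jk => /andP[/eqP-> /eqP->].
    by rewrite -!mulrA (mulrCA (rsign g k)) rsign_sqr mulr1 rsign_sqr.
  by rewrite -!mulrA (mulrA (rsign g k)) rsign_sqr mul1r rsign_sqr.
move/negbT: pair_jk; rewrite mul0r /same_pair negb_or !negb_and => /andP[jk_lm kj_lm].
have kj : k != j by rewrite eq_sym.
have [jl|jl] := eqVneq j l.
  subst l; under eq_bigr do rewrite (mulrC (rsign _ j)).
  by apply: sum_rsign4_unpaired; rewrite // eq_sym; move: jk_lm; rewrite eqxx.
have [jm|jm] := eqVneq j m.
  subst m; under eq_bigr do rewrite (mulrC (rsign _ j)).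
  by apply: sum_rsign4_unpaired; rewrite // eq_sym; move: kj_lm; rewrite eqxx orbF.
exact: sum_rsign4_unpaired.
Qed.

End RandomSigns.

Section RandomHash.
Variables (R : numFieldType) (I : finType) (s' : nat).
Local Notation hashes := {ffun I -> 'I_s'.+1}.

Definition shift_at k (c : 'I_s'.+1) (h : hashes) : hashes :=
  [ffun x => if x == k then h x + c else h x].

Lemma shift_at_inj k c : injective (shift_at k c).
Proof.
move=> h1 h2 /ffunP h12; apply/ffunP => x; have := h12 x; rewrite !ffunE.
by case: (x == k) => // /addIr.
Qed.

(* Shifting h k by c is a bijection, so every residue h j - h k is equally likely. *)
Lemma sum_hash_collision (j k : I) : j != k ->
  \sum_(h : hashes) ((h j == h k)%:R : R) = #|{: hashes}|%:R / s'.+1%:R.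
Proof.
move=> jk.
have shift_sum c : \sum_(h : hashes) ((h j == h k)%:R : R) =
    \sum_(h : hashes) ((h j == h k + c)%:R : R).
  rewrite (reindex_inj (@shift_at_inj k c)); apply: eq_bigr => h _.
  by rewrite !ffunE (negbTE jk) eqxx.
have : s'.+1%:R * \sum_(h : hashes) ((h j == h k)%:R : R) = #|{: hashes}|%:R.
  transitivity (\sum_(c : 'I_s'.+1) \sum_(h : hashes) ((h j == h k + c)%:R : R)).
    by rewrite -(eq_bigr _ (fun c _ => shift_sum c)) sumr_const card_ord mulr_natl.
  rewrite exchange_big /= -sumr_const.
  apply: eq_bigr => h _; rewrite -[RHS](sum_natr_eq_mul (h j - h k) (fun=> 1)).
  by apply: eq_bigr => c _; rewrite mulr1 [c == _]eq_sym subr_eq [c + _]addrC.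
by move=> <-; rewrite mulrAC divff ?mul1r // pnatr_eq0.
Qed.

End RandomHash.

Section CountSketchError.
Variables (R : numFieldType) (n s' : nat).
Local Notation hashes := {ffun 'I_n -> 'I_s'.+1}.
Local Notation signs := {ffun 'I_n -> bool}.
Local Notation S h g := (@countsketch R s'.+1 n h g).

Definition sketch_err (h : hashes) (g : signs) : 'M[R]_n := (S h g)^T *m S h g - 1%:M.

Lemma trmx_sketch_err h g : (sketch_err h g)^T = sketch_err h g.
Proof. by rewrite /sketch_err linearB /= trmx_mul trmxK trmx1. Qed.

Lemma countsketch_gramE h g j k :
  ((S h g)^T *m S h g) j k = (h j == h k)%:R * (rsign R g j * rsign R g k).
Proof.
rewrite mxE (bigD1 (h j)) //= big1 ?addr0 => [|i /negbTE hj_i]; rewrite !mxE.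
  by rewrite eqxx [h k == _]eq_sym /rsign; case: (h j == h k); rewrite ?mulr0 ?mul0r ?mul1r.
by rewrite eq_sym hj_i mul0r.
Qed.

Lemma sketch_errE h g j k :
  sketch_err h g j k = ((j != k) && (h j == h k))%:R * (rsign R g j * rsign R g k).
Proof.
rewrite /sketch_err [LHS]mxE [X in _ + X]mxE countsketch_gramE mxE.
have [<-|jk] := eqVneq j k; first by rewrite eqxx rsign_sqr mulr1 subrr mul0r.
by rewrite subr0.
Qed.

Lemma sum_sketch_err2 (j k l m : 'I_n) :
  \sum_(p : hashes * signs) sketch_err p.1 p.2 j k * sketch_err p.1 p.2 l m =
  ((j != k) && same_pair j k l m)%:R * #|{: hashes * signs}|%:R / s'.+1%:R.
Proof.
have [<-|jk] := eqVneq j k.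
  by rewrite !mul0r big1 // => p _; rewrite sketch_errE eqxx !mul0r.
have [<-|lm] := eqVneq l m.
  have -> : same_pair j k l l = false.
    by apply/negP => /orP[] /andP[/eqP lj /eqP lk]; move: jk; rewrite -lj -lk eqxx.
  by rewrite !mul0r big1 // => p _; rewrite (sketch_errE _ _ l) eqxx !mul0r mulr0.
rewrite -(pair_bigA _ (fun h g => sketch_err h g j k * sketch_err h g l m)) /=.
transitivity (\sum_(h : hashes) ((h j == h k)%:R * (h l == h m)%:R) *
    \sum_(g : signs) rsign R g j * rsign R g k * rsign R g l * rsign R g m).
  apply: eq_bigr => h _; rewrite mulr_sumr; apply: eq_bigr => g _.
  by rewrite !sketch_errE jk lm /=; ring.
rewrite sum_rsign4 // card_prod natrM /=.
case pair_jk: (same_pair j k l m); last first.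
  by rewrite !mul0r big1 // => h _; rewrite mulr0.
have same_hash (h : hashes) : (h l == h m) = (h j == h k).
  by case/orP: pair_jk => /andP[/eqP-> /eqP->]; rewrite // eq_sym.
under eq_bigr do rewrite same_hash -natrM mulnb andbb.
by rewrite -mulr_suml sum_hash_collision // !mul1r mulrAC.
Qed.

Lemma sum_mxtrace_sketch_err (K : 'M[R]_n) :
  \sum_(p : hashes * signs) \tr (sketch_err p.1 p.2 *m K *m sketch_err p.1 p.2 *m K) =
  #|{: hashes * signs}|%:R / s'.+1%:R *
    \sum_j \sum_k (j != k)%:R * (K k j * K k j + K k k * K j j).
Proof.
set c := _ / _.
transitivity (\sum_j \sum_l \sum_k \sum_i K k l * K i j *
    \sum_(p : hashes * signs) sketch_err p.1 p.2 j k * sketch_err p.1 p.2 l i).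
  under eq_bigr do rewrite mxtrace_mul4E.
  rewrite exchange_big; apply: eq_bigr => j _.
  rewrite exchange_big; apply: eq_bigr => l _.
  rewrite exchange_big; apply: eq_bigr => k _.
  rewrite exchange_big; apply: eq_bigr => i _.
  by rewrite mulr_sumr; apply: eq_bigr => p _; ring.
rewrite mulr_sumr; apply: eq_bigr => j _.
rewrite exchange_big mulr_sumr; apply: eq_bigr => k _.
have [<-|jk] := eqVneq j k.
  rewrite mul0r mulr0; apply: big1 => l _; apply: big1 => i _.
  by rewrite sum_sketch_err2 eqxx !mul0r mulr0.
transitivity (\sum_l (l == j)%:R * \sum_i (i == k)%:R * (K k l * K i j * c) +
    \sum_l (l == k)%:R * \sum_i (i == j)%:R * (K k l * K i j * c)).
  rewrite -big_split; apply: eq_bigr => l _; rewrite !mulr_sumr -big_split.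
  by apply: eq_bigr => i _; rewrite sum_sketch_err2 jk same_pairE // /c /=; ring.
rewrite /= (sum_natr_eq_mul j) !(sum_natr_eq_mul k) (sum_natr_eq_mul j); ring.
Qed.

End CountSketchError.

(** * The ridge leverage matrix *)

Section RidgeLeverage.
Variables (R : rcfType) (n d : nat) (Z : 'M[R]_(n, d)) (lam : R).
Hypotheses (lam_ge0 : 0 <= lam) (nondeg : 0 < lam \/ \rank Z = d).
Local Notation A := (Z^T *m Z + lam%:M).

Definition ridge_aug : 'M[R]_(n + d, d) := col_mx Z (Num.sqrt lam)%:M.

(* K = Z A^-1 Z^T *)
Definition ridge_leverage : 'M[R]_n := ulsubmx (orthoproj ridge_aug).

Local Notation C := ridge_aug.
Local Notation P := (orthoproj ridge_aug).
Local Notation K := ridge_leverage.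
Local Notation pad D := (block_mx D 0 0 (0 : 'M[R]_d)).

Lemma ridge_aug_gram : C^T *m C = A.
Proof.
by rewrite tr_col_mx mul_row_col tr_scalar_mx -scalar_mxM -expr2 sqr_sqrtr.
Qed.

Lemma ridge_gram_posdef v : v != 0 -> 0 < qform A v.
Proof.
move=> v_neq0; rewrite -ridge_aug_gram qform_gram lt_def.
rewrite sumr_ge0 ?andbT => [|a _]; last exact: sqr_ge0.
apply: contra v_neq0 => /eqP/psumr_eq0P Cv0.
have {Cv0} : C *m v = 0.
  apply/matrixP => a b; rewrite ord1 [RHS]mxE.
  by apply/eqP; rewrite -sqrf_eq0; apply/eqP/Cv0 => // c _; exact: sqr_ge0.
rewrite mul_col_mx => /eqP; rewrite col_mx_eq0 => /andP[/eqP Zv /eqP sqrt_lam_v].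
case: nondeg => [lam_gt0|Z_full].
  move: sqrt_lam_v; rewrite mul_scalar_mx => /eqP; rewrite scalemx_eq0.
  by rewrite gt_eqF ?sqrtr_gt0.
rewrite -trmx_eq0 -(mulmx_free_eq0 _ (B := Z^T)); last by rewrite /row_free mxrank_tr Z_full.
by rewrite -trmx_mul Zv trmx0.
Qed.

Lemma ridge_aug_gram_unit : C^T *m C \in unitmx.
Proof. by rewrite ridge_aug_gram; apply: posdef_unitmx; exact: ridge_gram_posdef. Qed.

Let trmx_P : P^T = P := trmx_orthoproj C.
Let P_idem : P *m P = P := orthoproj_idem ridge_aug_gram_unit.

Lemma mxtrace_ridge_leverage : \tr K = stat_dim Z lam.
Proof.
rewrite /ridge_leverage /orthoproj ridge_aug_gram /ridge_aug tr_col_mx mul_col_mx.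
by rewrite mul_col_row block_mxKul /stat_dim mxtrace_mulC mulmxA mxtrace_mulC.
Qed.

Lemma ridge_leverage_entry_sqr_le j k : K k j ^+ 2 <= K k k * K j j.
Proof.
have K_entry x y : K x y = P (lshift d x) (lshift d y) by rewrite !mxE.
by rewrite !K_entry; apply: idem_entry_sqr_le.
Qed.

Lemma mxtrace_conj_pad (D : 'M[R]_n) : \tr (pad D *m P *m pad D *m P) = \tr (D *m K *m D *m K).
Proof.
rewrite -[P](submxK P) !mulmx_block !mul0mx !mulmx0 !addr0 ?add0r.
by rewrite mxtrace_block !mul0mx !addr0 mxtrace0 addr0.
Qed.

Lemma trmx_pad (D : 'M[R]_n) : D^T = D -> (pad D)^T = pad D.
Proof. by move=> trmx_D; rewrite tr_block_mx trmx_D !trmx0. Qed.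

Lemma ridge_aug_conj_pad (D : 'M[R]_n) : C^T *m pad D *m C = Z^T *m D *m Z.
Proof.
by rewrite tr_col_mx mul_row_block !mulmx0 !addr0 mul_row_col mul0mx addr0.
Qed.

Lemma mxtrace_conj_ridge_leverage_ge0 D : D^T = D -> 0 <= \tr (D *m K *m D *m K).
Proof. by move=> /trmx_pad trmx_D; rewrite -mxtrace_conj_pad mxtrace_conj_idem_ge0. Qed.

Lemma qform_ridge_perturb_sqr_le D v : D^T = D ->
  qform (Z^T *m D *m Z) v ^+ 2 <= \tr (D *m K *m D *m K) * qform A v ^+ 2.
Proof.
move=> /trmx_pad trmx_D.
have -> : qform (Z^T *m D *m Z) v = qform (pad D) (C *m v).
  by rewrite -ridge_aug_conj_pad /qform trmx_mul !mulmxA.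
rewrite -ridge_aug_gram qform_gram -mxtrace_conj_pad.
by apply: qform_sqr_le_mxtrace_conj; rewrite // mulmxA orthoproj_mul ?ridge_aug_gram_unit.
Qed.

Variable s' : nat.
Local Notation hashes := {ffun 'I_n -> 'I_s'.+1}.
Local Notation signs := {ffun 'I_n -> bool}.
Local Notation E h g := (sketch_err R h g).
Local Notation S h g := (countsketch R h g).

Lemma sum_mxtrace_sketch_err_le :
  \sum_(p : hashes * signs) \tr (E p.1 p.2 *m K *m E p.1 p.2 *m K) <=
  #|{: hashes * signs}|%:R / s'.+1%:R * (2 * stat_dim Z lam ^+ 2).
Proof.
rewrite sum_mxtrace_sketch_err -mxtrace_ridge_leverage ler_wpM2l ?divr_ge0 //.
exact/sum_offdiag_le/ridge_leverage_entry_sqr_le.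
Qed.

Lemma countsketch_rel_perturb (h : hashes) (g : signs) :
  \tr (E h g *m K *m E h g *m K) <= 1/9 ->
  forall v, v != 0 -> 0 < qform A v /\
    qform (Z^T *m (S h g)^T *m S h g *m Z + lam%:M - A) v ^+ 2 <= qform A v ^+ 2 / 9.
Proof.
move=> err_small v v_neq0; split; first exact: ridge_gram_posdef.
have -> : Z^T *m (S h g)^T *m S h g *m Z + lam%:M - A = Z^T *m E h g *m Z.
  by rewrite /sketch_err mulmxBr mulmxBl mulmx1 !mulmxA opprD addrACA subrr addr0.
have := qform_ridge_perturb_sqr_le v (trmx_sketch_err R h g).
have := sqr_ge0 (qform A v); nra.
Qed.

End RidgeLeverage.

Lemma countsketch_good_event (R : realType) n d s' (Z : 'M[R]_(n, d)) lam
    (h : {ffun 'I_n -> 'I_s'.+1}) (g : {ffun 'I_n -> bool}) :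
  0 <= lam -> (0 < lam \/ \rank Z = d) ->
  \tr (sketch_err R h g *m ridge_leverage Z lam *m sketch_err R h g *m ridge_leverage Z lam)
    <= 1/9 ->
  good_event Z lam (countsketch R h g).
Proof.
move=> lam_ge0 nondeg /(countsketch_rel_perturb lam_ge0 nondeg) perturb.
have eig := rel_perturb_gen_eig perturb.
by split; [exact: rel_perturb_unitmx perturb | | exact: gen_kappa_le].
Qed.

Unset Implicit Arguments.

Theorem lemma3p1 (R : realType) (n d s : nat) (Z : 'M[R]_(n, d)) (lam delta : R) :
  0 <= lam ->
  (0 < lam \/ \rank Z = d) ->
  0 < delta < 1 ->
  (0 < s)%N ->
  20 * (stat_dim Z lam) ^+ 2 / delta <= s%:R ->
  1 - delta <= @countsketch_prob R n s
                 (fun h g => good_event Z lam (@countsketch R s n h g)).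
Proof.
move=> lam_ge0 nondeg /andP[delta_gt0 delta_lt1] s_gt0 s_large.
case: s s_gt0 s_large => // s' _ s_large; rewrite /countsketch_prob /=.
set K := ridge_leverage Z lam; set t := stat_dim Z lam in s_large *.
set good := [set p | asbool (good_event Z lam (countsketch R p.1 p.2))].
have good_of_small (p : {ffun 'I_n -> 'I_s'.+1} * {ffun 'I_n -> bool}) :
    \tr (sketch_err R p.1 p.2 *m K *m sketch_err R p.1 p.2 *m K) <= 1/9 -> p \in good.
  by move=> small; rewrite inE; apply/asboolP; exact: countsketch_good_event.
have markov := card_markov (fun p => mxtrace_conj_ridge_leverage_ge0 lam_ge0 nondeg
  (trmx_sketch_err R p.1 p.2)) good_of_small.
have mean_le := sum_mxtrace_sketch_err_le lam_ge0 nondeg s'.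
set N := (#|{: {ffun 'I_n -> 'I_s'.+1} * {ffun 'I_n -> bool}}|%:R : R) in markov mean_le *.
have N_gt0 : 0 < N by rewrite ltr0n; apply/card_gt0P; exists ([ffun=> ord0], [ffun=> true]).
have mean_small : N / s'.+1%:R * (2 * t ^+ 2) <= N * delta / 10.
  rewrite mulrAC -mulrA -[N * delta / 10]mulrA ler_wpM2l ?(ltW N_gt0) // ler_pdivrMr //.
  by move: s_large; rewrite ler_pdivrMr //; lra.
rewrite ler_pdivlMr //.
have := le_trans markov (le_trans mean_le mean_small); have := mulr_gt0 N_gt0 delta_gt0.
lra.
Qed.
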